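(* Let $G$ be a finitely generated group hyperbolic relative to a finite collection $\mathcal P$, $S$ a finite generating set, and $(\epsilon,R,D)$ thin-triangle constants. Let $U\subset V\cup W$ be a finite subset that is $6D$-convex with respect to some $b\in U$. Then for every $n\ge 7D$, the subgraph of the $n$-Rips graph $\Gamma_n$ induced on $U$ is dismantlable.
   Context: $\Gamma$ is the Cayley graph of $G$ w.r.t. $S$, $V=G$, $W$ the set of cosets $gP_\lambda$; relative hyperbolicity means the coned-off Cayley graph (vertex set $V\cup W$, edges of $\Gamma$ plus edges $(v,w)$ for $v\in w$) is fine and $\delta$-hyperbolic. $|\cdot,\cdot|_S$ is extended to $V\cup W$ via distances in $\Gamma$ between corresponding elements/cosets. $\Gamma_n$ has vertex set $V\cup W$ and an edge between $u\ne u'$ whenever $|u,u'|_S\le n$. For a geodesic edge-path $p=(p_j)_{j=0}^\ell$ in $\Gamma$, $p_i$ is $(\epsilon,R)$-deep in $w\in W$ if $R\le i\le\ell-R$ and $|p_j,w|_S\le\epsilon$ for all $|j-i|\le R$. A geodesic from $a$ to $b$ ($a,b\in V\cup W$) is a geodesic in $\Gamma$ of length $|a,b|_S$ starting at $a$ (if $a\in V$) or in $a$ (if $a\in W$), ending analogously at $b$; for $i>\ell$, $p_i:=p_\ell$. Positive integers $(\epsilon,R,D)$ are thin-triangle constants if: $D\ge\epsilon$; no vertex of a geodesic in $\Gamma$ is $(\epsilon,R)$-deep in two distinct cosets; and for all $a,b,c\in V\cup W$ with $a\ne b$, geodesics $p^{ab},p^{bc},p^{ac}$, $\ell=|a,b|_S$,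 $0\le i\le\ell$, with $z=w$ if $p^{ab}_i$ is $(\epsilon,R)$-deep in $w$ and $z=p^{ab}_i$ otherwise, we have $|z,p^{ac}_i|_S\le D$ or $|z,p^{bc}_{\ell-i}|_S\le D$. A subset $U\subset V\cup W$ is $\nu$-convex with respect to $u\in U$ if for every $u'\in U$, every geodesic $(p_j)_{j=0}^\ell$ from $u$ to $u'$ in $\Gamma$ and every $j\le\ell-\nu$: $p_j\in U$, and every $w\in W$ with $|w,p_j|_S\le\epsilon$ lies in $U$. In a graph, a vertex $a$ is dominated by an adjacent vertex $z\ne a$ if every vertex adjacent to $a$ is also adjacent to $z$. A finite graph is dismantlable if its vertices can be ordered $a_1,\ldots,a_k$ so that for each $i<k$, $a_i$ is dominated in the subgraph induced on $\{a_i,\ldots,a_k\}$. *)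

From Stdlib Require Import List Arith.
Import ListNotations.
Set Implicit Arguments.

Section Graph.
Variables (X : Type) (vt : X -> Prop) (adj : X -> X -> Prop).

(* x :: l is a walk (consecutive vertices adjacent); its length is length l *)
Fixpoint is_walk (x : X) (l : list X) : Prop :=
  match l with
  | [] => True
  | y :: l' => adj x y /\ is_walk y l'
  end.

Definition gdist_le (x y : X) (k : nat) : Prop :=
  exists l, is_walk x l /\ last l x = y /\ length l <= k.

Definition is_geod (x y : X) (l : list X) : Prop :=
  is_walk x l /\ last l x = y /\
  forall l', is_walk x l' -> last l' x = y -> length l <= length l'.

Definition graph_hyperbolic (delta : nat) : Prop :=
  (forall x y, vt x -> vt y -> exists l, is_walk x l /\ last l x = y) /\
  (forall x y z lxy lyz lxz, vt x -> vt y -> vt z ->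
     is_geod x y lxy -> is_geod y z lyz -> is_geod x z lxz ->
     forall v, In v (x :: lxy) ->
       exists w, (In w (y :: lyz) \/ In w (x :: lxz)) /\ gdist_le v w delta).

(* c = x :: c' is a circuit (simple cycle) x, c'..., back to x *)
Definition is_circuit (c : list X) : Prop :=
  match c with
  | [] => False
  | x :: c' => is_walk x (c' ++ [x]) /\ NoDup c /\ 3 <= length c
  end.

Definition circuit_has_edge (c : list X) (u v : X) : Prop :=
  match c with
  | [] => False
  | x :: c' => exists l1 l2, x :: c' ++ [x] = l1 ++ u :: v :: l2 \/
                             x :: c' ++ [x] = l1 ++ v :: u :: l2
  end.

Definition graph_fine : Prop :=
  forall u v, vt u -> vt v -> adj u v -> forall n,
    exists L : list (list X), forall c,
      is_circuit c -> length c = n -> circuit_has_edge c u v -> In c L.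

(* a is dominated by an adjacent z <> a in the subgraph induced on Y
   (closed-neighbourhood convention) *)
Definition dominated (Y : list X) (a z : X) : Prop :=
  In z Y /\ z <> a /\ adj a z /\
  forall x, In x Y -> adj a x -> x <> z -> adj z x.

Definition dismantlable (U : list X) : Prop :=
  exists ord : list X, NoDup ord /\ (forall x, In x ord <-> In x U) /\
    forall pre a rest, ord = pre ++ a :: rest -> rest <> [] ->
      exists z, dominated (a :: rest) a z.
End Graph.

Record setting := Setting {
  carrier :> Type;
  mul : carrier -> carrier -> carrier;
  inv : carrier -> carrier;
  one : carrier;
  gens : list carrier;
  parabolics : list (carrier -> Prop)
}.

Section Setting.
Variable X : setting.
Notation G := (carrier X).

Definition is_group : Prop :=
  (forall x y z : G, mul X x (mul X y z) = mul X (mul X x y) z) /\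
  (forall x : G, mul X (one X) x = x) /\ (forall x : G, mul X x (one X) = x) /\
  (forall x : G, mul X (inv X x) x = one X) /\ (forall x : G, mul X x (inv X x) = one X).

Definition is_subgroup (H : G -> Prop) : Prop :=
  H (one X) /\ (forall x y, H x -> H y -> H (mul X x y)) /\ (forall x, H x -> H (inv X x)).

Definition eval_word (w : list (G * bool)) : G :=
  fold_right (fun (sb : G * bool) (acc : G) => mul X (if snd sb then fst sb else inv X (fst sb)) acc) (one X) w.

Definition generates : Prop :=
  forall g : G, exists w, (forall sb, In sb w -> In (fst sb) (gens X)) /\ g = eval_word w.

Definition is_coset (C : G -> Prop) : Prop :=
  exists (g : G) (H : G -> Prop), @In (G -> Prop) H (parabolics X) /\
    forall x, C x <-> H (mul X (inv X g) x).

(* vertex set V \cup W: group elements and cosets (cosets as predicates) *)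
Inductive vtx : Type := VV (g : G) | WW (C : G -> Prop).

Definition valid (v : vtx) : Prop :=
  match v with VV _ => True | WW C => is_coset C end.

Definition pts (v : vtx) : G -> Prop :=
  match v with VV g => fun x => x = g | WW C => C end.

Definition cay (g h : G) : Prop :=
  exists s, In s (gens X) /\ (h = mul X g s \/ g = mul X h s).

Definition cay_path (l : nat) (p : nat -> G) : Prop :=
  forall i, i < l -> cay (p i) (p (i + 1)).

(* convention p_i := p_l for i > l *)
Definition pt (l : nat) (p : nat -> G) (i : nat) : G := p (Nat.min i l).

Definition path_from_to (u u' : vtx) (l : nat) (p : nat -> G) : Prop :=
  cay_path l p /\ pts u (p 0) /\ pts u' (p l).

Definition dle (u u' : vtx) (k : nat) : Prop :=
  exists l p, path_from_to u u' l p /\ l <= k.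

Definition geodesic (u u' : vtx) (l : nat) (p : nat -> G) : Prop :=
  path_from_to u u' l p /\ forall m q, path_from_to u u' m q -> l <= m.

Definition geodesic_edge_path (l : nat) (p : nat -> G) : Prop :=
  geodesic (VV (p 0)) (VV (p l)) l p.

Definition deep (eps R l : nat) (p : nat -> G) (i : nat) (C : G -> Prop) : Prop :=
  R <= i /\ i + R <= l /\
  forall j, j <= i + R -> i <= j + R -> dle (VV (p j)) (WW C) eps.

Definition thin_triangle_constants (eps R D : nat) : Prop :=
  0 < eps /\ 0 < R /\ 0 < D /\ eps <= D /\
  (forall l p i C1 C2, geodesic_edge_path l p -> i <= l ->
     is_coset C1 -> is_coset C2 -> deep eps R l p i C1 -> deep eps R l p i C2 ->
     C1 = C2) /\
  (forall a b c, valid a -> valid b -> valid c -> a <> b ->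
   forall l1 p1 l2 p2 l3 p3,
     geodesic a b l1 p1 -> geodesic b c l2 p2 -> geodesic a c l3 p3 ->
     forall i, i <= l1 ->
       (forall C, is_coset C -> deep eps R l1 p1 i C ->
          dle (WW C) (VV (pt l3 p3 i)) D \/ dle (WW C) (VV (pt l2 p2 (l1 - i))) D) /\
       ((forall C, is_coset C -> ~ deep eps R l1 p1 i C) ->
          dle (VV (p1 i)) (VV (pt l3 p3 i)) D \/
          dle (VV (p1 i)) (VV (pt l2 p2 (l1 - i))) D)).

Definition convex (eps nu : nat) (U : list vtx) (u : vtx) : Prop :=
  forall u', In u' U -> forall l p, geodesic u u' l p ->
    forall j, j + nu <= l ->
      In (VV (p j)) U /\
      (forall C, is_coset C -> dle (WW C) (VV (p j)) eps -> In (WW C) U).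

Definition coned_adj (u v : vtx) : Prop :=
  match u, v with
  | VV g, VV h => cay g h
  | VV g, WW C => is_coset C /\ C g
  | WW C, VV g => is_coset C /\ C g
  | WW _, WW _ => False
  end.

Definition rel_hyperbolic : Prop :=
  exists delta : nat,
    graph_fine valid coned_adj /\ graph_hyperbolic valid coned_adj delta.

Definition rips (n : nat) (u v : vtx) : Prop := u <> v /\ dle u v n.
End Setting.

Arguments VV {X} g.
Arguments WW {X} C.

(** The vertices of [U] are removed in order of decreasing distance from [b], ending with [b].
    A vertex [a] with [|b,a|_S <= n] is dominated by [b].  Otherwise let [z] be the point of a
    geodesic from [a] to [b] at distance [6D] from [a], or the coset in which that point is deep.
    By convexity [z] lies in [U], and it is strictly closer to [b] than [a], so it has not been
    removed yet.  For every remaining neighbour [x] of [a], the thin triangle [a, b, x] places [z]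
    within [D] of a point of [[a,x]] or of [[b,x]] at distance at most [6D] from [x], so
    [|z,x|_S <= 7D <= n]: [z] dominates [a]. *)

From Stdlib Require Import List Arith Lia Classical ClassicalEpsilon Wf_nat.
Import ListNotations.
Set Implicit Arguments.

Section Dismantling.
Variables (X : Type) (adj : X -> X -> Prop).
Variable eq_dec : forall x y : X, {x = y} + {x <> y}.

Lemma dominated_ext (Y Y' : list X) (a z : X) :
  (forall x, In x Y <-> In x Y') -> dominated adj Y a z -> dominated adj Y' a z.
Proof.
  intros HY (Hz & Hza & Haz & Hdom).
  repeat split; auto.
  - apply HY; exact Hz.
  - intros x Hx; apply Hdom, HY; exact Hx.
Qed.

Lemma dismantlable_ext (U U' : list X) :
  (forall x, In x U <-> In x U') -> dismantlable adj U -> dismantlable adj U'.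
Proof.
  intros HU [ord (Hnd & Hord & Hdom)].
  exists ord; split; [exact Hnd|split; [|exact Hdom]].
  intros x; rewrite Hord; apply HU.
Qed.

Lemma dismantlable_singleton (b : X) : dismantlable adj [b].
Proof.
  exists [b]; repeat split; auto using NoDup_cons, NoDup_nil.
  intros [|c pre] a rest E Hrest; simpl in E.
  - injection E as _ <-; contradiction.
  - injection E as _ E; destruct pre; discriminate.
Qed.

Lemma dismantlable_cons (a : X) (Y : list X) :
  ~ In a Y -> Y <> [] -> (exists z, dominated adj (a :: Y) a z) ->
  dismantlable adj Y -> dismantlable adj (a :: Y).
Proof.
  intros HaY HY [z Hz] [ord (Hnd & Hord & Hdom)].
  exists (a :: ord); repeat split.
  - constructor; [rewrite Hord|]; assumption.
  - intros [<-|Hx]; [left|right; apply Hord]; auto.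
  - intros [<-|Hx]; [left|right; apply Hord]; auto.
  - intros [|c pre] a' rest E Hrest; simpl in E; injection E as <- E.
    + exists z; subst rest; apply dominated_ext with (a :: Y); auto.
      intros x; simpl; rewrite Hord; reflexivity.
    + exact (Hdom pre a' rest E Hrest).
Qed.

Lemma exists_max_rank (f : X -> nat) (l : list X) :
  l <> [] -> exists a, In a l /\ forall y, In y l -> f y <= f a.
Proof.
  induction l as [|x l IH]; intros Hl; [contradiction|].
  destruct l as [|y l].
  - exists x; split; [left; auto|]; intros y [<-|[]]; auto.
  - destruct IH as [a [Ha Hmax]]; [discriminate|].
    destruct (Nat.le_ge_cases (f x) (f a)).
    + exists a; split; [right; auto|]; intros z [<-|Hz]; auto.
    + exists x; split; [left; auto|]; intros z [<-|Hz]; auto.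
      specialize (Hmax z Hz); lia.
Qed.

Lemma in_cons_remove (a : X) (Y : list X) :
  In a Y -> forall x, In x (a :: remove eq_dec a Y) <-> In x Y.
Proof.
  intros Ha x; split.
  - intros [<-|Hx]; [exact Ha|apply (in_remove eq_dec) in Hx; apply Hx].
  - intros Hx; destruct (eq_dec x a) as [->|Hxa]; [left; auto|].
    right; apply in_in_remove; auto.
Qed.

Lemma dismantlable_by_rank (f : X -> nat) (b : X) (U : list X) :
  In b U -> (forall u, In u U -> f b <= f u) ->
  (forall a Y, In a Y -> In b Y -> a <> b -> (forall y, In y Y -> In y U) ->
     (forall y, In y Y -> f y <= f a) -> (forall u, In u U -> f u < f a -> In u Y) ->
     exists z, dominated adj Y a z) ->
  dismantlable adj U.
Proof.
  intros HbU Hmin Hdom.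
  (* [Y] is the set of vertices not yet removed; each removed vertex outranks all of [Y]. *)
  enough (Hclaim : forall Y, In b Y -> (forall y, In y Y -> In y U) ->
            (forall u y, In u U -> ~ In u Y -> In y Y -> f y <= f u) -> dismantlable adj Y)
    by (apply Hclaim; auto; intros u y Hu Hn; contradiction).
  intros Y; remember (length Y) as k eqn:Hk; revert Y Hk.
  induction k as [k IH] using lt_wf_ind; intros Y Hk HbY HYU Hout.
  destruct (remove eq_dec b Y) as [|c rest] eqn:Hrem.
  - apply dismantlable_ext with [b]; [|apply dismantlable_singleton].
    intros x; rewrite <- (in_cons_remove b Y HbY), Hrem; reflexivity.
  - destruct (exists_max_rank f (l := c :: rest)) as [a [Ha Hmax]]; [discriminate|].
    rewrite <- Hrem in Ha, Hmax; apply in_remove in Ha as [HaY Hab].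
    set (Y' := remove eq_dec a Y).
    assert (HY' := in_cons_remove a Y HaY).
    assert (Hfa : forall y, In y Y -> f y <= f a).
    { intros y Hy; destruct (eq_dec y b) as [->|Hyb]; [apply Hmin, HYU; auto|].
      apply Hmax, in_in_remove; auto. }
    assert (HbY' : In b Y') by (apply in_in_remove; auto).
    apply dismantlable_ext with (a :: Y'); [exact HY'|]; apply dismantlable_cons.
    + apply remove_In.
    + intros E; rewrite E in HbY'; contradiction.
    + apply Hdom; try (intros y Hy; apply HY' in Hy); auto.
      * left; reflexivity.
      * right; exact HbY'.
      * intros u Hu Hlt; apply HY'.
        destruct (in_dec eq_dec u Y) as [|HuY]; auto.
        specialize (Hout u a Hu HuY HaY); lia.
    + apply (IH (length Y')); auto.
      * subst k; apply remove_length_lt; exact HaY.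
      * intros y Hy; apply HYU, (in_remove eq_dec Y y a Hy).
      * intros u y Hu HuY' Hy; apply in_remove in Hy as [Hy _].
        destruct (eq_dec u a) as [->|Hua]; [apply Hfa; auto|].
        apply (Hout u y Hu); auto; intros HuY; apply HuY', in_in_remove; auto.
Qed.

End Dismantling.

Section CayleyPaths.
Variable X : setting.

Lemma cay_sym (g h : X) : cay X g h -> cay X h g.
Proof. intros [s [Hs [E|E]]]; exists s; auto. Qed.

Lemma cay_path_rev (l : nat) (p : nat -> X) :
  cay_path X l p -> cay_path X l (fun i => p (l - i)).
Proof.
  intros Hp i Hi; cbn beta.
  replace (l - i) with (l - (i + 1) + 1) by lia.
  apply cay_sym, Hp; lia.
Qed.

Lemma cay_path_shift (l : nat) (p : nat -> X) (j : nat) :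
  cay_path X l p -> cay_path X (l - j) (fun i => p (j + i)).
Proof.
  intros Hp i Hi; cbn beta.
  replace (j + (i + 1)) with (j + i + 1) by lia.
  apply Hp; lia.
Qed.

Lemma cay_path_app (l1 l2 : nat) (p q : nat -> X) :
  cay_path X l1 p -> cay_path X l2 q -> q 0 = p l1 ->
  cay_path X (l1 + l2) (fun i => if i <=? l1 then p i else q (i - l1)).
Proof.
  intros Hp Hq E i Hi; cbn beta.
  destruct (Nat.leb_spec i l1), (Nat.leb_spec (i + 1) l1); try lia.
  - apply Hp; lia.
  - replace i with l1 by lia; rewrite <- E.
    replace (l1 + 1 - l1) with (0 + 1) by lia; apply Hq; lia.
  - replace (i + 1 - l1) with (i - l1 + 1) by lia; apply Hq; lia.
Qed.

Lemma geodesic_rev (u v : vtx X) (l : nat) (p : nat -> X) :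
  geodesic u v l p -> geodesic v u l (fun i => p (l - i)).
Proof.
  intros [[Hp [H0 Hl]] Hmin]; split.
  - split; [apply cay_path_rev; exact Hp|].
    cbn beta; rewrite Nat.sub_0_r, Nat.sub_diag; auto.
  - intros m q [Hq [Hq0 Hqm]].
    apply (Hmin m (fun i => q (m - i))); split; [apply cay_path_rev; exact Hq|].
    cbn beta; rewrite Nat.sub_0_r, Nat.sub_diag; auto.
Qed.

Lemma dle_weaken (u v : vtx X) (k k' : nat) : dle u v k -> k <= k' -> dle u v k'.
Proof. intros [l [p [Hp Hk]]] Hk'; exists l, p; split; [exact Hp|lia]. Qed.

Lemma dle_sym (u v : vtx X) (k : nat) : dle u v k -> dle v u k.
Proof.
  intros [l [p [[Hp [H0 Hl]] Hk]]].
  exists l, (fun i => p (l - i)); split; [|exact Hk].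
  split; [apply cay_path_rev; exact Hp|].
  cbn beta; rewrite Nat.sub_0_r, Nat.sub_diag; auto.
Qed.

Lemma dle_trans (u v : vtx X) (g : X) (k1 k2 : nat) :
  dle u (VV g) k1 -> dle (VV g) v k2 -> dle u v (k1 + k2).
Proof.
  intros [l1 [p [[Hp [Hp0 Hpl]] Hk1]]] [l2 [q [[Hq [Hq0 Hql]] Hk2]]]; simpl in Hpl, Hq0.
  exists (l1 + l2), (fun i => if i <=? l1 then p i else q (i - l1)).
  split; [|lia]; split; [apply cay_path_app; [exact Hp|exact Hq|congruence]|]; cbn beta.
  rewrite (proj2 (Nat.leb_le 0 l1)) by lia; split; [exact Hp0|].
  destruct (Nat.leb_spec (l1 + l2) l1).
  - replace l2 with 0 in * by lia; rewrite Nat.add_0_r, Hpl, <- Hq0; exact Hql.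
  - replace (l1 + l2 - l1) with l2 by lia; exact Hql.
Qed.

Lemma dle_pts (u : vtx X) (g : X) : pts u g -> dle u (VV g) 0.
Proof.
  intros Hg; exists 0, (fun _ => g); repeat split; auto.
  intros i Hi; lia.
Qed.

Lemma dle_cay (g h : X) : cay X g h -> dle (VV g) (VV h) 1.
Proof.
  intros Hgh; exists 1, (fun i => if i =? 0 then g else h); repeat split; auto.
  intros i Hi; replace i with 0 by lia; exact Hgh.
Qed.

Lemma dle_prefix (u v : vtx X) (l : nat) (p : nat -> X) (j : nat) :
  path_from_to u v l p -> j <= l -> dle u (VV (p j)) j.
Proof.
  intros [Hp [H0 Hl]] Hj; exists j, p; repeat split; auto.
  intros i Hi; apply Hp; lia.
Qed.

(* The clamping [pt l p i = p (min i l)] matches the truncated subtraction [l - i]. *)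
Lemma dle_trans_pt (w u v : vtx X) (l : nat) (p : nat -> X) (i k : nat) :
  path_from_to u v l p -> dle w (VV (pt X l p i)) k -> dle w v (k + (l - i)).
Proof.
  intros [Hp [H0 Hl]] Hw; unfold pt in Hw.
  replace (l - i) with (l - Nat.min i l) by lia.
  apply (dle_trans Hw).
  exists (l - Nat.min i l), (fun j => p (Nat.min i l + j)); repeat split; auto.
  - apply cay_path_shift; exact Hp.
  - cbn beta; rewrite Nat.add_0_r; reflexivity.
  - cbn beta; replace (Nat.min i l + (l - Nat.min i l)) with l by lia; exact Hl.
Qed.

End CayleyPaths.

Section RipsGraph.
Variable X : setting.

(* [|u,v|_S]; for vertices joined by no path it is an unspecified junk value. *)
Definition dist_S (u v : vtx X) : nat :=
  epsilon (inhabits 0) (fun k => dle u v k /\ forall k', dle u v k' -> k <= k').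

Hypothesis HG : is_group X.
Hypothesis Hgen : generates X.
Hypothesis Hsub : forall H, In H (parabolics X) -> is_subgroup X H.

Lemma dle_eval_word (w : list (X * bool)) (g : X) :
  (forall sb, In sb w -> In (fst sb) (gens X)) ->
  exists k, dle (VV g) (VV (mul X g (eval_word X w))) k.
Proof.
  destruct HG as (Hassoc & _ & Hone & Hinv & _).
  revert g; induction w as [|[s e] w IH]; intros g Hw; simpl.
  - exists 0; rewrite Hone; apply dle_pts; reflexivity.
  - set (s' := if e then s else inv X s).
    destruct (IH (mul X g s')) as [k Hk]; [intros sb Hsb; apply Hw; right; exact Hsb|].
    exists (1 + k); rewrite Hassoc; apply (dle_trans (g := mul X g s')), Hk; apply dle_cay.
    exists s; split; [apply (Hw (s, e)); left; reflexivity|].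
    unfold s'; destruct e; [left; reflexivity|right].
    rewrite <- Hassoc, Hinv, Hone; reflexivity.
Qed.

Lemma valid_pts (u : vtx X) : valid u -> exists g, pts u g.
Proof.
  destruct HG as (_ & _ & _ & Hinv & _).
  destruct u as [g|C]; simpl; [exists g; reflexivity|].
  intros [g [H [HH HC]]]; exists g; apply HC; rewrite Hinv; apply (Hsub H HH).
Qed.

Lemma dle_valid (u v : vtx X) : valid u -> valid v -> exists k, dle u v k.
Proof.
  destruct HG as (Hassoc & Hone & _ & _ & Hinv).
  intros Hu Hv; destruct (valid_pts u Hu) as [g Hg], (valid_pts v Hv) as [h Hh].
  destruct (Hgen (mul X (inv X g) h)) as [w [Hw Eh]].
  destruct (dle_eval_word w g Hw) as [k Hk].
  rewrite <- Eh, Hassoc, Hinv, Hone in Hk.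
  exists (0 + (k + 0)).
  apply (dle_trans (dle_pts _ _ Hg)), (dle_trans Hk), dle_sym, dle_pts, Hh.
Qed.

Lemma dist_S_spec (u v : vtx X) : valid u -> valid v ->
  dle u v (dist_S u v) /\ forall k, dle u v k -> dist_S u v <= k.
Proof.
  intros Hu Hv; unfold dist_S; apply epsilon_spec.
  destruct (dec_inh_nat_subset_has_unique_least_element (dle u v)) as [k [Hk _]].
  - intros k; apply classic.
  - apply dle_valid; assumption.
  - exists k; exact Hk.
Qed.

Lemma geodesic_dist_S (u v : vtx X) : valid u -> valid v ->
  exists p, geodesic u v (dist_S u v) p.
Proof.
  intros Hu Hv; destruct (dist_S_spec u v Hu Hv) as [[l [p [Hp Hl]]] Hmin].
  assert (El : l = dist_S u v) by (apply Nat.le_antisymm; [exact Hl|apply Hmin; exists l, p; auto]).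
  subst l; exists p; split; [exact Hp|].
  intros m q Hq; apply Hmin; exists m, q; auto.
Qed.

Lemma dist_S_self (u : vtx X) : valid u -> dist_S u u = 0.
Proof.
  intros Hu; destruct (valid_pts u Hu) as [g Hg].
  apply Nat.le_0_r, (dist_S_spec u u Hu Hu), (dle_trans (g := g) (k1 := 0) (k2 := 0)).
  - apply dle_pts, Hg.
  - apply dle_sym, dle_pts, Hg.
Qed.

Variables eps R D : nat.

(* The vertices that [eps]-convexity adds to [U] along with the point [g] of a geodesic. *)
Definition near_vertex (g : X) (z : vtx X) : Prop :=
  z = VV g \/ exists C, is_coset X C /\ z = WW C /\ dle (WW C) (VV g) eps.

Lemma dle_near_vertex (g : X) (z : vtx X) : near_vertex g z -> dle (VV g) z eps.
Proof.
  intros [->|[C (_ & -> & HC)]]; [|apply dle_sym; exact HC].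
  apply (dle_weaken (k := 0)); [apply dle_pts; reflexivity|lia].
Qed.

Lemma convex_near_vertex (nu : nat) (U : list (vtx X)) (b a : vtx X) l p j z :
  convex eps nu U b -> In a U -> geodesic b a l p -> j + nu <= l ->
  near_vertex (p j) z -> In z U.
Proof.
  intros Hconv Ha Hp Hj [->|[C (HC & -> & HCj)]];
    apply (Hconv a Ha l p Hp j Hj); assumption.
Qed.

Hypothesis HT : thin_triangle_constants X eps R D.

Lemma thin_triangle_center (a b : vtx X) (l : nat) (q : nat -> X) (i : nat) :
  valid a -> valid b -> a <> b -> geodesic a b l q -> i <= l ->
  exists z, near_vertex (q i) z /\
    forall x k p m r, valid x -> geodesic b x k p -> geodesic a x m r ->
      dle z (VV (pt X m r i)) D \/ dle z (VV (pt X k p (l - i))) D.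
Proof.
  destruct HT as (_ & _ & _ & _ & _ & Hthin).
  intros Ha Hb Hab Hq Hi.
  destruct (classic (exists C, is_coset X C /\ deep X eps R l q i C))
    as [[C [HC Hdeep]]|Hshallow].
  - exists (WW C); split.
    + right; exists C; split; [exact HC|split; [reflexivity|]].
      destruct Hdeep as (_ & _ & Hd); apply dle_sym, Hd; lia.
    + intros x k p m r Hx Hp Hr.
      apply (proj1 (Hthin a b x Ha Hb Hx Hab l q k p m r Hq Hp Hr i Hi) C HC Hdeep).
  - exists (VV (q i)); split; [left; reflexivity|].
    intros x k p m r Hx Hp Hr.
    apply (proj2 (Hthin a b x Ha Hb Hx Hab l q k p m r Hq Hp Hr i Hi)).
    intros C HC Hdeep; apply Hshallow; exists C; auto.
Qed.

Lemma base_dominates (n : nat) (b a : vtx X) (Y : list (vtx X)) :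
  valid b -> (forall y, In y Y -> valid y) -> In a Y -> In b Y -> a <> b ->
  (forall y, In y Y -> dist_S b y <= dist_S b a) -> dist_S b a <= n ->
  dominated (rips n) Y a b.
Proof.
  intros Hb HY HaY HbY Hab Hmax Hn.
  assert (Hnear : forall y, In y Y -> dle b y n).
  { intros y Hy; apply (dle_weaken (k := dist_S b y)); [apply dist_S_spec; auto|].
    specialize (Hmax y Hy); lia. }
  split; [exact HbY|split; [intros E; apply Hab; auto|split]].
  - split; [exact Hab|].
    apply dle_sym, (dle_weaken (k := dist_S b a)); [apply dist_S_spec|]; auto.
  - intros x Hx _ Hxb; split; auto.
Qed.

Lemma far_vertex_dominated (n : nat) (U Y : list (vtx X)) (b a : vtx X) :
  (forall u, In u U -> valid u) -> convex eps (6 * D) U b -> In b U ->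
  In a Y -> (forall y, In y Y -> In y U) -> a <> b ->
  (forall y, In y Y -> dist_S b y <= dist_S b a) ->
  (forall u, In u U -> dist_S b u < dist_S b a -> In u Y) ->
  7 * D <= n -> n < dist_S b a ->
  exists z, dominated (rips n) Y a z.
Proof.
  destruct HT as (_ & _ & HD & HeD & _).
  intros HU Hconv HbU HaY HYU Hab Hmax Hclosed Hn Hfar.
  assert (Hb : valid b) by auto; assert (Ha : valid a) by auto.
  set (l := dist_S b a) in *.
  destruct (geodesic_dist_S b a Hb Ha) as [p Hp]; fold l in Hp.
  pose proof (geodesic_rev Hp) as Hq.
  destruct (thin_triangle_center (i := 6 * D) Ha Hb Hab Hq) as [z [Hz Hcenter]]; [lia|].
  cbn beta in Hz.
  assert (HzU : In z U).
  { apply (convex_near_vertex (l - 6 * D) Hconv (HYU a HaY) Hp); [lia|exact Hz]. }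
  assert (Hbz : dist_S b z < l).
  { apply (Nat.le_lt_trans _ (l - 6 * D + eps)); [|lia].
    apply dist_S_spec; auto.
    apply (dle_trans (dle_prefix (j := l - 6 * D) (proj1 Hp) (Nat.le_sub_l _ _))).
    apply dle_near_vertex, Hz. }
  assert (Haz : dle a z (6 * D + eps)).
  { apply (dle_trans (dle_prefix (j := 6 * D) (proj1 Hq) ltac:(lia))).
    apply dle_near_vertex, Hz. }
  exists z; split; [apply Hclosed; auto|split; [intros ->; lia|split]].
  - split; [intros ->; lia|].
    apply (dle_weaken Haz); lia.
  - intros x Hx [_ Hax] Hxz; split; [intros E; apply Hxz; auto|].
    assert (Hvx : valid x) by auto.
    destruct (geodesic_dist_S b x Hb Hvx) as [p2 Hp2].
    destruct (geodesic_dist_S a x Ha Hvx) as [r Hr].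
    assert (dist_S a x <= n) by (apply dist_S_spec; auto).
    assert (dist_S b x <= l) by auto.
    destruct (Hcenter x _ _ _ _ Hvx Hp2 Hr) as [Hc|Hc].
    + apply (dle_weaken (dle_trans_pt _ (proj1 Hr) Hc)); lia.
    + apply (dle_weaken (dle_trans_pt _ (proj1 Hp2) Hc)); lia.
Qed.

End RipsGraph.

Theorem lemma3p13 (X : setting) (eps R D : nat) (U : list (vtx X)) (b : vtx X) :
  is_group X ->
  generates X ->
  (forall H, In H (parabolics X) -> is_subgroup X H) ->
  rel_hyperbolic X ->
  thin_triangle_constants X eps R D ->
  (forall u, In u U -> @valid X u) ->
  In b U ->
  @convex X eps (6 * D) U b ->
  forall n : nat, 7 * D <= n ->
    dismantlable (@rips X n) U.
Proof.
  (* Relative hyperbolicity is only used through the thin-triangle constants. *)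
  intros HG Hgen Hsub _ HT HU Hb Hconv n Hn.
  apply (dismantlable_by_rank (fun x y => excluded_middle_informative (x = y)) (dist_S b) U Hb).
  - intros u _; rewrite dist_S_self; auto; lia.
  - intros a Y HaY HbY Hab HYU Hmax Hclosed.
    destruct (Nat.le_gt_cases (dist_S b a) n) as [Hnear|Hfar].
    + exists b; apply (base_dominates HG Hgen Hsub); auto.
    + apply (far_vertex_dominated HG Hgen Hsub HT (U := U) Y (b := b)); auto.
Qed.
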